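(* Let $\mathbb{X}$ be a Cartesian left additive category. A $\mathsf{D}$-sequence $f_\bullet:A\to B$ is linear, i.e. $\mathsf{D}[f_\bullet]=\pi_1\cdot f_\bullet$, if and only if $f_\bullet=i_\bullet\cdot f_0$.
   Context: Composition in diagrammatic order. A Cartesian left additive category: finite products, hom-sets commutative monoids with $f(g+h)=fg+fh$, $f0=0$, projections additive. $\mathsf{P}(X)=X\times X$, $\mathsf{P}(f)=f\times f$. A pre-$\mathsf{D}$-sequence $f_\bullet:A\to B$ is $(f_n)_{n\ge0}$ with $f_n:\mathsf{P}^n(A)\to B$; $(h\cdot f_\bullet)_n=\mathsf{P}^n(h)f_n$, $(f_\bullet\cdot k)_n=f_nk$; $\mathsf{D}[f_\bullet]:\mathsf{P}(A)\to B$, $\mathsf{D}[f_\bullet]_n=f_{n+1}$; identity $i_\bullet$ with $i_0=1$, $i_n=\pi_1\cdots\pi_1$ ($n$ times). In the claim $\pi_1:\mathsf{P}(A)\to A$. A $\mathsf{D}$-sequence is a pre-$\mathsf{D}$-sequence such that for all $n$, with $X=\mathsf{P}^n(A)$: $\langle1,0\rangle\cdot\mathsf{D}^{n+1}[f_\bullet]=0_\bullet$; $(1\times(\pi_0+\pi_1))\cdot\mathsf{D}^{n+1}[f_\bullet]=(1\times\pi_0)\cdot\mathsf{D}^{n+1}[f_\bullet]+(1\times\pi_1)\cdot\mathsf{D}^{n+1}[f_\bullet]$; $\ell\cdot\mathsf{D}^{n+2}[f_\bullet]=\mathsf{D}^{n+1}[f_\bullet]$ with $\ell=\langle1,0\rangle\times\langle0,1\rangle$;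 $c\cdot\mathsf{D}^{n+2}[f_\bullet]=\mathsf{D}^{n+2}[f_\bullet]$ with $c=\langle\langle\pi_0\pi_0,\pi_1\pi_0\rangle,\langle\pi_0\pi_1,\pi_1\pi_1\rangle\rangle$ (sums and $0_\bullet$ pointwise). *)

(* plain Rocq, no library needed.
   Cartesian left additive categories, composition in DIAGRAMMATIC order:
   comp f g  =  "f then g"  (written f g / f . g in the paper). *)

Set Implicit Arguments.
Unset Strict Implicit.

Record CLACat := {
  Obj : Type;
  Hom : Obj -> Obj -> Type;
  comp : forall A B C : Obj, Hom A B -> Hom B C -> Hom A C;
  idm : forall A : Obj, Hom A A;
  comp_assoc : forall (A B C D : Obj) (f : Hom A B) (g : Hom B C) (h : Hom C D),
      comp (comp f g) h = comp f (comp g h);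
  comp_id_l : forall (A B : Obj) (f : Hom A B), comp (idm A) f = f;
  comp_id_r : forall (A B : Obj) (f : Hom A B), comp f (idm B) = f;
  term : Obj;
  bang : forall A : Obj, Hom A term;
  bang_uniq : forall (A : Obj) (f : Hom A term), f = bang A;
  prod : Obj -> Obj -> Obj;
  proj0 : forall A B : Obj, Hom (prod A B) A;
  proj1 : forall A B : Obj, Hom (prod A B) B;
  pair : forall C A B : Obj, Hom C A -> Hom C B -> Hom C (prod A B);
  pair_proj0 : forall (C A B : Obj) (f : Hom C A) (g : Hom C B),
      comp (pair f g) (proj0 A B) = f;
  pair_proj1 : forall (C A B : Obj) (f : Hom C A) (g : Hom C B),
      comp (pair f g) (proj1 A B) = g;
  pair_uniq : forall (C A B : Obj) (h : Hom C (prod A B)),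
      h = pair (comp h (proj0 A B)) (comp h (proj1 A B));
  add : forall A B : Obj, Hom A B -> Hom A B -> Hom A B;
  zero : forall A B : Obj, Hom A B;
  add_assoc : forall (A B : Obj) (f g h : Hom A B), add (add f g) h = add f (add g h);
  add_comm : forall (A B : Obj) (f g : Hom A B), add f g = add g f;
  add_0l : forall (A B : Obj) (f : Hom A B), add (zero A B) f = f;
  comp_add_r : forall (A B C : Obj) (f : Hom A B) (g h : Hom B C),
      comp f (add g h) = add (comp f g) (comp f h);
  comp_zero_r : forall (A B C : Obj) (f : Hom A B), comp f (zero B C) = zero A C;
  proj0_add : forall (C A B : Obj) (f g : Hom C (prod A B)),
      comp (add f g) (proj0 A B) = add (comp f (proj0 A B)) (comp g (proj0 A B));
  proj0_zero : forall (C A B : Obj), comp (zero C (prod A B)) (proj0 A B) = zero C A;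
  proj1_add : forall (C A B : Obj) (f g : Hom C (prod A B)),
      comp (add f g) (proj1 A B) = add (comp f (proj1 A B)) (comp g (proj1 A B));
  proj1_zero : forall (C A B : Obj), comp (zero C (prod A B)) (proj1 A B) = zero C B
}.

Arguments comp {c A B C} _ _.
Arguments idm {c} A.
Arguments prod {c} _ _.
Arguments proj0 {c} A B.
Arguments proj1 {c} A B.
Arguments pair {c C A B} _ _.
Arguments add {c A B} _ _.
Arguments zero {c} A B.

Section DSeq.
Variable X : CLACat.
Local Notation Ob := (Obj X).
Local Notation "A ~> B" := (@Hom X A B) (at level 70).

Definition pmap (A B A' B' : Ob) (f : A ~> A') (g : B ~> B') : prod A B ~> prod A' B' :=
  pair (comp (proj0 A B) f) (comp (proj1 A B) g).

Definition P (A : Ob) : Ob := prod A A.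
Definition Pf (A B : Ob) (f : A ~> B) : P A ~> P B := pmap f f.

(* P^n, with the convention P^(n+1)(A) = P^n(P(A)) (same object) *)
Fixpoint Pn (n : nat) (A : Ob) : Ob :=
  match n with 0 => A | S m => Pn m (P A) end.
Fixpoint Pnf (n : nat) (A B : Ob) (f : A ~> B) : Pn n A ~> Pn n B :=
  match n with 0 => f | S m => Pnf m (Pf f) end.

(* P^n with the convention P^(n+1)(A) = P(P^n(A)) (same object) *)
Fixpoint Qn (n : nat) (A : Ob) : Ob :=
  match n with 0 => A | S m => P (Qn m A) end.

Definition preDseq (A B : Ob) := forall n : nat, Pn n A ~> B.

Definition seq_eq (A B : Ob) (f g : preDseq A B) : Prop := forall n, f n = g n.
Definition seq_add (A B : Ob) (f g : preDseq A B) : preDseq A B := fun n => add (f n) (g n).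
Definition seq_zero (A B : Ob) : preDseq A B := fun n => zero (Pn n A) B.

Definition precomp (C A B : Ob) (h : C ~> A) (f : preDseq A B) : preDseq C B :=
  fun n => comp (Pnf n h) (f n).
Definition postcomp (A B B' : Ob) (f : preDseq A B) (k : B ~> B') : preDseq A B' :=
  fun n => comp (f n) k.

Definition Dsq (A B : Ob) (f : preDseq A B) : preDseq (P A) B := fun n => f (S n).

Fixpoint Dpow (n : nat) (A B : Ob) (f : preDseq A B) : preDseq (Qn n A) B :=
  match n with 0 => f | S m => Dsq (Dpow m f) end.

(* identity pre-D-sequence: i_0 = 1, i_n = pi_1 ... pi_1 (n times) *)
Fixpoint iseq (n : nat) (A : Ob) : Pn n A ~> A :=
  match n with 0 => idm A | S m => comp (iseq m (P A)) (proj1 A A) end.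

Definition is_Dseq (A B : Ob) (f : preDseq A B) : Prop :=
  forall n : nat,
    let Y := Qn n A in
    seq_eq (precomp (pair (idm Y) (zero Y Y)) (Dpow (S n) f)) (seq_zero Y B)
    /\ seq_eq (precomp (pmap (idm Y) (add (proj0 Y Y) (proj1 Y Y))) (Dpow (S n) f))
              (seq_add (precomp (pmap (idm Y) (proj0 Y Y)) (Dpow (S n) f))
                       (precomp (pmap (idm Y) (proj1 Y Y)) (Dpow (S n) f)))
    /\ seq_eq (precomp (pmap (pair (idm Y) (zero Y Y)) (pair (zero Y Y) (idm Y)))
                       (Dpow (S (S n)) f))
              (Dpow (S n) f)
    /\ seq_eq (precomp (pair (pair (comp (proj0 (P Y) (P Y)) (proj0 Y Y))
                                   (comp (proj1 (P Y) (P Y)) (proj0 Y Y)))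
                             (pair (comp (proj0 (P Y) (P Y)) (proj1 Y Y))
                                   (comp (proj1 (P Y) (P Y)) (proj1 Y Y))))
                       (Dpow (S (S n)) f))
              (Dpow (S (S n)) f).

End DSeq.

(* Linearity D[f] = pi_1 . f says f_(n+1) = P^n(pi_1) f_n, so f is determined by f_0.
   The identity sequence i_. is linear because i_(n+1) = i_n(P A) pi_1 = P^n(pi_1) i_n
   by naturality of i_., and linearity is preserved by postcomposition; hence the
   linear sequences are exactly the i_. f_0.  None of the D-sequence axioms is used. *)

Section Linear.
Variable X : CLACat.
Local Notation "A ~> B" := (@Hom X A B) (at level 70).

Definition is_linear {A B : Obj X} (f : preDseq A B) : Prop :=
  seq_eq (Dsq f) (precomp (proj1 A A) f).

Definition idseq (A : Obj X) : preDseq A A := fun n => iseq n A.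

Lemma Pf_proj1 (A A' : Obj X) (h : A ~> A') :
  comp (Pf h) (proj1 A' A') = comp (proj1 A A) h.
Proof. apply pair_proj1. Qed.

Lemma iseq_natural (n : nat) : forall (A A' : Obj X) (h : A ~> A'),
  comp (Pnf n h) (iseq n A') = comp (iseq n A) h.
Proof.
  induction n as [|n IH]; intros A A' h; simpl.
  - rewrite comp_id_r, comp_id_l. reflexivity.
  - rewrite <- comp_assoc, IH, comp_assoc, Pf_proj1, <- comp_assoc. reflexivity.
Qed.

Lemma idseq_linear (A : Obj X) : is_linear (idseq A).
Proof. intro n. symmetry. apply iseq_natural. Qed.

Lemma postcomp_linear {A B B' : Obj X} (f : preDseq A B) (k : B ~> B') :
  is_linear f -> is_linear (postcomp f k).
Proof.
  intros Hf n. unfold postcomp, precomp, Dsq.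
  rewrite <- comp_assoc. f_equal. apply Hf.
Qed.

Lemma linear_seq_eq {A B : Obj X} (f g : preDseq A B) :
  seq_eq f g -> is_linear g -> is_linear f.
Proof.
  intros Hfg Hg n. unfold Dsq, precomp.
  rewrite (Hfg (S n)), (Hfg n). apply Hg.
Qed.

Lemma linear_eq_idseq {A B : Obj X} (f : preDseq A B) :
  is_linear f -> seq_eq f (postcomp (idseq A) (f 0)).
Proof.
  intros Hf n. unfold postcomp, idseq. induction n as [|n IH].
  - symmetry. apply comp_id_l.
  - change (f (S n)) with (Dsq f n). rewrite (Hf n). unfold precomp.
    rewrite IH, <- comp_assoc, iseq_natural. reflexivity.
Qed.

End Linear.

Theorem lemma4p23 (X : CLACat) (A B : Obj X) (f : @preDseq X A B) :
  is_Dseq f ->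
  (seq_eq (Dsq f) (precomp (proj1 A A) f)
   <-> seq_eq f (postcomp (fun n => @iseq X n A) (f 0))).
Proof.
  intros _. split.
  - apply linear_eq_idseq.
  - intro Hf. eapply linear_seq_eq; [exact Hf |].
    apply postcomp_linear, idseq_linear.
Qed.
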